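(* Let $\Lambda$ be any of the logics $K$, $T$, $K4$, $K5$, $S4$, $S5$. A formula $\varphi$ of the language $\mathcal{L}_{\Box\ddagger}$ (formulas built from $\top$, atoms, $\lnot$, $\land$, $\Box$ and $[\ddagger\pi]$ for propositional $\pi$) is true at every world of every $\Lambda$-model if and only if it is derivable in the proof system $\Lambda+\mathrm{Ax}$ described below (derivations may use formulas of the larger language $\mathcal{L}^{+}$).
   Context: Fix a countable non-empty set $\mathit{At}$ of atoms. A literal is an atom or its negation; a clause is a finite set $D$ of literals read as $\bigvee D$ ($\bigvee\varnothing:=\bot$); it is tautological if it contains $p$ and $\lnot p$ for some $p$. For propositional $\pi$, $\mathcal{C}(\pi)$ is the set of non-tautological clauses $D$ with $\models\pi\to\bigvee D$ and no $D'\subsetneq D$ with $\models\pi\to\bigvee D'$. Language $\mathcal{L}^{+}$ extends $\mathcal{L}_{\Box\ddagger}$ with operators $[D_1,D_2]_i$ for $i\in\{0,1,2\}$ and any finite non-tautological clauses $D_1,D_2$. Models: $\mathcal{M}=\langle W,R,V\rangle$, $W\neq\varnothing$, $R\subseteq W\times W$, $V:\mathit{At}\to\mathcal{P}(W)$, standard semantics for atoms, Booleans and $\Box$. For finite non-tautological clauses $D_1,D_2$, $\mathcal{M}^{(D_1,D_2)}=\langle W',R',V'\rangle$ has $W'=W\times\{0,1,2\}$, $(w,i)R'(v,j)$ iff $wRv$, $(w,0)\in V'(p)$ iff $w\in V(p)$, and for $i\in\{1,2\}$: $(w,i)\in V'(p)$ iff $\lnot p\in D_i$, or $\{p,\lnot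 p\}\cap D_i=\varnothing$ and $w\in V(p)$. Semantics: $\mathcal{M},w\models[D_1,D_2]_i\varphi$ iff $\mathcal{M}^{(D_1,D_2)},(w,i)\models\varphi$; $\mathcal{M},w\models[\ddagger\pi]\varphi$ iff for all $D_1\in\mathcal{C}(\pi)$, $D_2\in\mathcal{C}(\lnot\pi)$, $\mathcal{M}^{(D_1,D_2)},(w,0)\models\varphi$. $\Lambda$-models: $K$ all; $T$ reflexive; $K4$ transitive; $K5$ euclidean; $S4$ reflexive transitive; $S5$ equivalence relations. Proof system $\Lambda$ over $\mathcal{L}^{+}$: all $\mathcal{L}^{+}$-instances of propositional tautologies, $\Box(\varphi\to\psi)\to(\Box\varphi\to\Box\psi)$, modus ponens, necessitation, plus $\Box\varphi\to\varphi$ (for $T,S4,S5$), $\Box\varphi\to\Box\Box\varphi$ (for $K4,S4,S5$), $\lnot\Box\varphi\to\Box\lnot\Box\varphi$ (for $K5,S5$). $\mathrm{Ax}$, for all propositional $\pi$, finite non-tautological $D_1,D_2$, atoms $p$, formulas $\varphi,\psi$, with $[\,\cdot\,]$ ranging over $[D_1,D_2]_0,[D_1,D_2]_1,[D_1,D_2]_2$: (1) $[\ddagger\pi]\varphi\leftrightarrow\bigwedge_{D_1\in\mathcal{C}(\pi)}\bigwedge_{D_2\in\mathcal{C}(\lnot\pi)}[D_1,D_2]_0\varphi$; (2) $[D_1,D_2]_0p\leftrightarrow p$; (3) for $j\in\{1,2\}$: $[D_1,D_2]_jp\leftrightarrow p$ if $\{p,\lnot p\}\cap D_j=\varnothing$;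 $\leftrightarrow\top$ if $\lnot p\in D_j$; $\leftrightarrow\bot$ if $p\in D_j$; (4) $[\,\cdot\,]\lnot\varphi\leftrightarrow\lnot[\,\cdot\,]\varphi$; (5) $[\,\cdot\,](\varphi\land\psi)\leftrightarrow([\,\cdot\,]\varphi\land[\,\cdot\,]\psi)$; (6) $[\,\cdot\,]\Box\varphi\leftrightarrow\Box([D_1,D_2]_0\varphi\land[D_1,D_2]_1\varphi\land[D_1,D_2]_2\varphi)$; (7) $[\,\cdot\,](\varphi\to\psi)\to([\,\cdot\,]\varphi\to[\,\cdot\,]\psi)$; (8) rule: from $\vdash\varphi$ infer $\vdash[\,\cdot\,]\varphi$. *)

From HB Require Import structures.
From mathcomp Require Import all_boot finmap.

Set Implicit Arguments.
Unset Strict Implicit.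
Unset Printing Implicit Defensive.

Local Open Scope fset_scope.

Inductive pf (X : Type) : Type :=
| PTop : pf X
| PVar : X -> pf X
| PNeg : pf X -> pf X
| PAnd : pf X -> pf X -> pf X.
Arguments PTop {X}.

Fixpoint peval (X : Type) (v : X -> bool) (a : pf X) : bool :=
  match a with
  | PTop => true
  | PVar x => v x
  | PNeg b => ~~ peval v b
  | PAnd b c => peval v b && peval v c
  end.

(* ---------- Literals and clauses over atoms A ----------
   A literal is a pair (p, b): (p, true) is the atom p, (p, false) is ~p.
   A clause is a finite set of literals, read as a disjunction. *)
Definition nontaut (A : choiceType) (D : {fset A * bool}) : bool :=
  all (fun l : A * bool => (l.1, ~~ l.2) \notin D) D.

Definition clause (A : choiceType) := {D : {fset A * bool} | nontaut D}.

Definition litv (A : Type) (v : A -> bool) (l : A * bool) : bool := v l.1 == l.2.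

Definition entails (A : choiceType) (pi : pf A) (D : {fset A * bool}) : Prop :=
  forall v : A -> bool, peval v pi -> exists2 l, l \in D & litv v l.

Definition Cset (A : choiceType) (pi : pf A) (D : clause A) : Prop :=
  entails pi (val D) /\
  forall D' : {fset A * bool}, D' `<` val D -> ~ entails pi D'.

Inductive upd : Type := U0 | U1 | U2.

Inductive form (A : choiceType) : Type :=
| FTop : form A
| FAtom : A -> form A
| FNeg : form A -> form A
| FAnd : form A -> form A -> form A
| FBox : form A -> form A
| FDag : pf A -> form A -> form A
| FUpd : clause A -> clause A -> upd -> form A -> form A.
Arguments FTop {A}.

Definition FBot (A : choiceType) : form A := FNeg FTop.
Arguments FBot {A}.
Definition FImp (A : choiceType) (f g : form A) : form A := FNeg (FAnd f (FNeg g)).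
Definition FIff (A : choiceType) (f g : form A) : form A := FAnd (FImp f g) (FImp g f).
Definition bigAnd (A : choiceType) (l : seq (form A)) : form A := foldr (@FAnd A) FTop l.

Fixpoint no_upd (A : choiceType) (f : form A) : bool :=
  match f with
  | FTop | FAtom _ => true
  | FNeg g | FBox g | FDag _ g => no_upd g
  | FAnd g h => no_upd g && no_upd h
  | FUpd _ _ _ _ => false
  end.

Definition upd_rel (W : Type) (R : W -> W -> Prop) : W * upd -> W * upd -> Prop :=
  fun x y => R x.1 y.1.

Definition upd_lit (A : choiceType) (W : Type) (D : clause A) (V : A -> W -> Prop)
  (p : A) (w : W) : Prop :=
  (p, false) \in val D \/ ((p, true) \notin val D /\ (p, false) \notin val D /\ V p w).

Definition upd_val (A : choiceType) (W : Type) (D1 D2 : clause A)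
  (V : A -> W -> Prop) : A -> W * upd -> Prop :=
  fun p x => match x.2 with
             | U0 => V p x.1
             | U1 => upd_lit D1 V p x.1
             | U2 => upd_lit D2 V p x.1
             end.

Fixpoint sat (A : choiceType) (W : Type) (R : W -> W -> Prop) (V : A -> W -> Prop)
  (w : W) (f : form A) {struct f} : Prop :=
  match f with
  | FTop => True
  | FAtom p => V p w
  | FNeg g => ~ sat R V w g
  | FAnd g h => sat R V w g /\ sat R V w h
  | FBox g => forall u, R w u -> sat R V u g
  | FDag pi g => forall D1 D2 : clause A, Cset pi D1 -> Cset (PNeg pi) D2 ->
                   sat (upd_rel R) (upd_val D1 D2 V) (w, U0) g
  | FUpd D1 D2 i g => sat (upd_rel R) (upd_val D1 D2 V) (w, i) g
  end.

Inductive logic : Type := LK | LT | LK4 | LK5 | LS4 | LS5.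

Definition hasT (L : logic) : bool :=
  match L with LT | LS4 | LS5 => true | _ => false end.
Definition has4 (L : logic) : bool :=
  match L with LK4 | LS4 | LS5 => true | _ => false end.
Definition has5 (L : logic) : bool :=
  match L with LK5 | LS5 => true | _ => false end.

Definition reflexive_R (W : Type) (R : W -> W -> Prop) := forall w, R w w.
Definition transitive_R (W : Type) (R : W -> W -> Prop) :=
  forall u v w, R u v -> R v w -> R u w.
Definition euclidean_R (W : Type) (R : W -> W -> Prop) :=
  forall u v w, R u v -> R u w -> R v w.
Definition symmetric_R (W : Type) (R : W -> W -> Prop) := forall u v, R u v -> R v u.

Definition frame (L : logic) (W : Type) (R : W -> W -> Prop) : Prop :=
  match L with
  | LK => True
  | LT => reflexive_R R
  | LK4 => transitive_R R
  | LK5 => euclidean_R R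
  | LS4 => reflexive_R R /\ transitive_R R
  | LS5 => reflexive_R R /\ symmetric_R R /\ transitive_R R
  end.

Definition valid (A : choiceType) (L : logic) (f : form A) : Prop :=
  forall (W : Type) (R : W -> W -> Prop) (V : A -> W -> Prop),
    inhabited W -> frame L R -> forall w : W, sat R V w f.

Fixpoint subst (A : choiceType) (s : nat -> form A) (t : pf nat) : form A :=
  match t with
  | PTop => FTop
  | PVar n => s n
  | PNeg b => FNeg (subst s b)
  | PAnd b c => FAnd (subst s b) (subst s c)
  end.

Inductive prv (A : choiceType) (L : logic) : form A -> Prop :=
| ax_taut (t : pf nat) (s : nat -> form A) :
    (forall v : nat -> bool, peval v t) -> prv L (subst s t)
| ax_K f g : prv L (FImp (FBox (FImp f g)) (FImp (FBox f) (FBox g)))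
| ax_T f : hasT L -> prv L (FImp (FBox f) f)
| ax_4 f : has4 L -> prv L (FImp (FBox f) (FBox (FBox f)))
| ax_5 f : has5 L -> prv L (FImp (FNeg (FBox f)) (FBox (FNeg (FBox f))))
| r_mp f g : prv L (FImp f g) -> prv L f -> prv L g
| r_nec f : prv L f -> prv L (FBox f)
| ax1 (pi : pf A) f (L1 L2 : seq (clause A)) :
    (forall D, D \in L1 <-> Cset pi D) ->
    (forall D, D \in L2 <-> Cset (PNeg pi) D) ->
    prv L (FIff (FDag pi f)
              (bigAnd [seq bigAnd [seq FUpd D1 D2 U0 f | D2 <- L2] | D1 <- L1]))
| ax2 D1 D2 p : prv L (FIff (FUpd D1 D2 U0 (FAtom p)) (FAtom p))
| ax3_keep D1 D2 j D p :
    (j = U1 /\ D = D1) \/ (j = U2 /\ D = D2) ->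
    (p, true) \notin val D -> (p, false) \notin val D ->
    prv L (FIff (FUpd D1 D2 j (FAtom p)) (FAtom p))
| ax3_top D1 D2 j D p :
    (j = U1 /\ D = D1) \/ (j = U2 /\ D = D2) ->
    (p, false) \in val D ->
    prv L (FIff (FUpd D1 D2 j (FAtom p)) FTop)
| ax3_bot D1 D2 j D p :
    (j = U1 /\ D = D1) \/ (j = U2 /\ D = D2) ->
    (p, true) \in val D ->
    prv L (FIff (FUpd D1 D2 j (FAtom p)) FBot)
| ax4 D1 D2 i f : prv L (FIff (FUpd D1 D2 i (FNeg f)) (FNeg (FUpd D1 D2 i f)))
| ax5 D1 D2 i f g :
    prv L (FIff (FUpd D1 D2 i (FAnd f g)) (FAnd (FUpd D1 D2 i f) (FUpd D1 D2 i g)))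
| ax6 D1 D2 i f :
    prv L (FIff (FUpd D1 D2 i (FBox f))
              (FBox (FAnd (FUpd D1 D2 U0 f) (FAnd (FUpd D1 D2 U1 f) (FUpd D1 D2 U2 f)))))
| ax7 D1 D2 i f g :
    prv L (FImp (FUpd D1 D2 i (FImp f g)) (FImp (FUpd D1 D2 i f) (FUpd D1 D2 i g)))
| r8 D1 D2 i f : prv L f -> prv L (FUpd D1 D2 i f).

From HB Require Import structures.
From mathcomp Require Import all_boot finmap.
From Stdlib Require Import Classical ClassicalDescription.

Set Implicit Arguments.
Unset Strict Implicit.
Unset Printing Implicit Defensive.

(** Soundness is checked axiom by axiom; the one structural point is that the
   relation of an update model only looks at first coordinates, so the update
   model of a Λ-frame is again a Λ-frame.  For completeness, axioms (1)-(8)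
   push every operator [D1,D2]_i inward until it disappears at the atoms, so
   every formula of L+ is provably equivalent to a pure modal one; the
   conjunction in (1) is finite because a minimal clause of π only mentions
   atoms of π.  The pure modal fragment is complete for Λ by the canonical
   model construction, whose accessibility relation inherits reflexivity,
   transitivity and euclideanness from the axioms T, 4 and 5. *)

Definition asbool (P : Prop) : bool :=
  if excluded_middle_informative P then true else false.

Lemma asboolP (P : Prop) : reflect P (asbool P).
Proof. by rewrite /asbool; case: excluded_middle_informative => HP; constructor. Qed.

Definition PImp (a b : pf nat) : pf nat := PNeg (PAnd a (PNeg b)).
Definition PIff (a b : pf nat) : pf nat := PAnd (PImp a b) (PImp b a).
Local Notation P0 := (PVar 0).
Local Notation P1 := (PVar 1).
Local Notation P2 := (PVar 2).
Local Notation P3 := (PVar 3).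

Ltac prv_tauto l t :=
  refine (@ax_taut _ _ t (nth FTop l) _);
  let v := fresh "v" in
  move=> v /=; repeat match goal with |- context [v ?n] => case: (v n) end;
  reflexivity.

Section Hilbert.
Variables (A : choiceType) (L : logic).
Implicit Types f g h : form A.

Lemma prv_mp2 f g h : prv L (FImp f (FImp g h)) -> prv L f -> prv L g -> prv L h.
Proof. by move=> Hfgh Hf Hg; apply: r_mp (r_mp Hfgh Hf) Hg. Qed.

Lemma prv_imp_trans f g h : prv L (FImp f g) -> prv L (FImp g h) -> prv L (FImp f h).
Proof.
by apply: prv_mp2; prv_tauto [:: f; g; h]
  (PImp (PImp P0 P1) (PImp (PImp P1 P2) (PImp P0 P2))).
Qed.

Lemma prv_iffI f g : prv L (FImp f g) -> prv L (FImp g f) -> prv L (FIff f g).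
Proof.
by apply: prv_mp2; prv_tauto [:: f; g] (PImp (PImp P0 P1) (PImp (PImp P1 P0) (PIff P0 P1))).
Qed.

Lemma prv_iffLR f g : prv L (FIff f g) -> prv L (FImp f g).
Proof. by apply: r_mp; prv_tauto [:: f; g] (PImp (PIff P0 P1) (PImp P0 P1)). Qed.

Lemma prv_iffRL f g : prv L (FIff f g) -> prv L (FImp g f).
Proof. by apply: r_mp; prv_tauto [:: f; g] (PImp (PIff P0 P1) (PImp P1 P0)). Qed.

Lemma prv_iff_refl f : prv L (FIff f f).
Proof. by prv_tauto [:: f] (PIff P0 P0). Qed.

Lemma prv_iff_trans f g h : prv L (FIff f g) -> prv L (FIff g h) -> prv L (FIff f h).
Proof.
move=> Hfg Hgh; apply: prv_iffI; apply: prv_imp_trans.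
- exact: prv_iffLR Hfg.
- exact: prv_iffLR Hgh.
- exact: prv_iffRL Hgh.
- exact: prv_iffRL Hfg.
Qed.

Lemma prv_iff_neg f g : prv L (FIff f g) -> prv L (FIff (FNeg f) (FNeg g)).
Proof. by apply: r_mp; prv_tauto [:: f; g] (PImp (PIff P0 P1) (PIff (PNeg P0) (PNeg P1))). Qed.

Lemma prv_iff_and f g f' g' : prv L (FIff f g) -> prv L (FIff f' g') ->
  prv L (FIff (FAnd f f') (FAnd g g')).
Proof.
apply: prv_mp2; prv_tauto [:: f; g; f'; g']
  (PImp (PIff P0 P1) (PImp (PIff P2 P3) (PIff (PAnd P0 P2) (PAnd P1 P3)))).
Qed.

Lemma prv_box_mono f g : prv L (FImp f g) -> prv L (FImp (FBox f) (FBox g)).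
Proof. by move=> Hfg; apply: r_mp (ax_K _ _ _) (r_nec Hfg). Qed.

Lemma prv_iff_box f g : prv L (FIff f g) -> prv L (FIff (FBox f) (FBox g)).
Proof.
by move=> Hfg; apply: prv_iffI; apply: prv_box_mono; [apply: prv_iffLR Hfg | apply: prv_iffRL Hfg].
Qed.

Lemma prv_upd_mono D1 D2 i f g :
  prv L (FImp f g) -> prv L (FImp (FUpd D1 D2 i f) (FUpd D1 D2 i g)).
Proof. by move=> Hfg; apply: r_mp (ax7 _ _ _ _ _ _) (r8 _ _ _ Hfg). Qed.

Lemma prv_iff_upd D1 D2 i f g :
  prv L (FIff f g) -> prv L (FIff (FUpd D1 D2 i f) (FUpd D1 D2 i g)).
Proof.
by move=> Hfg; apply: prv_iffI; apply: prv_upd_mono; [apply: prv_iffLR Hfg | apply: prv_iffRL Hfg].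
Qed.

Lemma prv_box_bigAnd (l : seq (form A)) g :
  prv L (FImp (bigAnd l) g) -> prv L (FImp (bigAnd (map (@FBox A) l)) (FBox g)).
Proof.
elim: l g => [|x l IH] g /= Hlg.
  have Hg : prv L g by apply: r_mp Hlg; prv_tauto [:: g] (PImp (PImp PTop P0) P0).
  by apply: r_mp (r_nec Hg); prv_tauto [:: FBox g] (PImp P0 (PImp PTop P0)).
have Hxg : prv L (FImp (bigAnd l) (FImp x g)).
  by apply: r_mp Hlg; prv_tauto [:: x; bigAnd l; g]
    (PImp (PImp (PAnd P0 P1) P2) (PImp P1 (PImp P0 P2))).
apply: prv_mp2 (IH _ Hxg) (ax_K _ _ _).
prv_tauto [:: bigAnd (map (@FBox A) l); FBox (FImp x g); FBox x; FBox g]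
  (PImp (PImp P0 P1) (PImp (PImp P1 (PImp P2 P3)) (PImp (PAnd P2 P0) P3))).
Qed.

Lemma prv_bigAnd_cat (l1 l2 : seq (form A)) :
  prv L (FImp (bigAnd (l1 ++ l2)) (FAnd (bigAnd l1) (bigAnd l2))).
Proof.
elim: l1 => [|x l1 IH] /=; first by prv_tauto [:: bigAnd l2] (PImp P0 (PAnd PTop P0)).
apply: r_mp IH; prv_tauto [:: bigAnd (l1 ++ l2); bigAnd l1; bigAnd l2; x]
  (PImp (PImp P0 (PAnd P1 P2)) (PImp (PAnd P3 P0) (PAnd (PAnd P3 P1) P2))).
Qed.

End Hilbert.

Section Soundness.
Variable A : choiceType.
Implicit Types f g : form A.

Lemma sat_imp W (R : W -> W -> Prop) V w f g :
  sat R V w (FImp f g) <-> (sat R V w f -> sat R V w g).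
Proof. by split=> /= [H Hf|H [Hf Hg]]; [apply: NNPP => Hg; apply: H | apply/Hg/H]. Qed.

Lemma sat_iff W (R : W -> W -> Prop) V w f g :
  sat R V w (FIff f g) <-> (sat R V w f <-> sat R V w g).
Proof. by have := sat_imp R V w f g; have := sat_imp R V w g f; rewrite /=; tauto. Qed.

Lemma sat_subst W (R : W -> W -> Prop) V w (s : nat -> form A) t :
  sat R V w (subst s t) <-> peval (fun n => asbool (sat R V w (s n))) t.
Proof.
elim: t => [|n|t IH|t1 IH1 t2 IH2] //=; first exact: rwP (asboolP _).
- by rewrite IH; case: (peval _ t); split.
- by rewrite IH1 IH2; split=> /andP.
Qed.

Lemma sat_bigAnd W (R : W -> W -> Prop) V w (T : eqType) (F : T -> form A) s :
  sat R V w (bigAnd (map F s)) <-> forall x, x \in s -> sat R V w (F x).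
Proof.
elim: s => [|y s IH] //=; rewrite IH; split=> [[Hy Hs] x|Hs].
- by rewrite in_cons => /predU1P [->|/Hs].
- by split=> [|x Hx]; apply: Hs; rewrite in_cons ?eqxx ?Hx ?orbT.
Qed.

Lemma frame_upd_rel L W (R : W -> W -> Prop) : frame L R -> frame L (upd_rel R).
Proof.
rewrite /upd_rel /reflexive_R /symmetric_R /transitive_R /euclidean_R.
by case: L => /=; firstorder.
Qed.

Lemma frame_reflexive L W (R : W -> W -> Prop) : hasT L -> frame L R -> reflexive_R R.
Proof. by case: L => //= _ => [[]|[]]. Qed.

Lemma frame_transitive L W (R : W -> W -> Prop) : has4 L -> frame L R -> transitive_R R.
Proof. by case: L => //= _ => [[]|[_ []]]. Qed.

Lemma frame_euclidean L W (R : W -> W -> Prop) : has5 L -> frame L R -> euclidean_R R.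
Proof. by case: L => //= _ [_ [Hsym Htr]] u v w /Hsym; apply: Htr. Qed.

Lemma frameI L W (R : W -> W -> Prop) :
  (hasT L -> reflexive_R R) -> (has4 L -> transitive_R R) -> (has5 L -> euclidean_R R) ->
  (hasT L -> has5 L -> symmetric_R R) -> frame L R.
Proof. by case: L => /= HT H4 H5 Hsym; do ?split; auto. Qed.

Lemma clause_nontaut (D : clause A) p b : (p, b) \in val D -> (p, ~~ b) \notin val D.
Proof. by case: D => D /= /allP; apply. Qed.

Lemma upd_val_clause W D1 D2 j D (V : A -> W -> Prop) p w :
  (j = U1 /\ D = D1) \/ (j = U2 /\ D = D2) -> upd_val D1 D2 V p (w, j) = upd_lit D V p w.
Proof. by case=> -[-> ->]. Qed.

Theorem soundness L f : prv L f -> valid L f.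
Proof.
elim=> {f} [t s Ht|f g|f HT|f H4|f H5|f g _ IHfg _ IHf|f _ IHf
  |pi f L1 L2 HL1 HL2|D1 D2 p|D1 D2 j D p HD Ht Hf|D1 D2 j D p HD Hf|D1 D2 j D p HD Ht
  |D1 D2 i f|D1 D2 i f g|D1 D2 i f|D1 D2 i f g|D1 D2 i f _ IHf] W R V HW HR w.
- by apply/sat_subst/Ht.
- rewrite !sat_imp => Hfg Hf u Hu; exact: (sat_imp R V u f g).1 (Hfg u Hu) (Hf u Hu).
- by rewrite sat_imp => /(_ w (frame_reflexive HT HR w)).
- by rewrite sat_imp => Hf u Hu v Hv; apply: Hf (frame_transitive H4 HR Hu Hv).
- rewrite sat_imp => /= Hnf u Hu Hfu; apply: Hnf => v Hv.
  exact: Hfu (frame_euclidean H5 HR Hu Hv).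
- exact: (sat_imp R V w f g).1 (IHfg W R V HW HR w) (IHf W R V HW HR w).
- by move=> u _; apply: IHf.
- rewrite sat_iff /= sat_bigAnd; split=> [Hf D1 /HL1 HD1|Hf D1 D2 /HL1 HD1 /HL2 HD2].
    by rewrite sat_bigAnd => D2 /HL2 HD2; apply: Hf.
  by move/sat_bigAnd: (Hf D1 HD1); apply.
- by rewrite sat_iff.
- rewrite sat_iff /= (upd_val_clause V p w HD) /upd_lit (negbTE Hf).
  by split=> [[//|[_ [_ //]]]|Hv]; last right.
- by rewrite sat_iff /= (upd_val_clause V p w HD) /upd_lit Hf; split=> //; left.
- rewrite sat_iff /= (upd_val_clause V p w HD) /upd_lit Ht (negbTE (clause_nontaut Ht)).
  by split=> [[|[]]|].
- by rewrite sat_iff.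
- by rewrite sat_iff.
- rewrite sat_iff /=; split=> [Hf u Hu|Hf [u j] Hu]; first by split; [|split]; apply: Hf.
  by case: (Hf u Hu) => [H0 [H1 H2]]; case: j {Hu}.
- by rewrite !sat_imp => /sat_imp.
- by apply: IHf; [exact: inhabits (w, i) | exact: frame_upd_rel].
Qed.
End Soundness.

Section ClauseSets.
Variable A : choiceType.
Local Open Scope fset_scope.

Fixpoint patoms (pi : pf A) : seq A :=
  match pi with
  | PTop => [::]
  | PVar x => [:: x]
  | PNeg b => patoms b
  | PAnd b c => patoms b ++ patoms c
  end.

Lemma peval_patoms (v v' : A -> bool) pi :
  {in patoms pi, v =1 v'} -> peval v pi = peval v' pi.
Proof.
elim: pi => [|x|b IH|b IHb c IHc] //= Hvv'.
- by apply: Hvv'; rewrite mem_head.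
- by rewrite IH.
- by rewrite IHb ?IHc // => x Hx; apply: Hvv'; rewrite mem_cat Hx ?orbT.
Qed.

Lemma clause_lit_eq (D : clause A) (l l' : A * bool) :
  l \in val D -> l' \in val D -> l'.1 = l.1 -> l' = l.
Proof.
case: l l' => [p b] [p' b'] Hl Hl' /= Ep; subst p'.
case: (eqVneq b' b) => [-> //|Nb].
have Eb' : b' = ~~ b by case: b b' Nb {Hl Hl'} => -[].
by move: (clause_nontaut Hl); rewrite -Eb' Hl'.
Qed.

(* If the atom of [l] does not occur in [pi], then [pi] already entails
   [D] minus [l]: at a valuation where [l] is the only true literal of [D],
   flipping that atom keeps [pi] true and the other literals unchanged. *)
Lemma Cset_patoms pi (D : clause A) l : Cset pi D -> l \in val D -> l.1 \in patoms pi.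
Proof.
move=> [Hent Hmin] Hl; apply: contraT => Hout; case: (Hmin (val D `\ l)).
  exact: fproperD1.
move=> v Hv; have [l' Hl' Hvl'] := Hent v Hv.
case: (eqVneq l' l) => [El'|Nl']; last by exists l' => //; apply/fsetD1P.
pose v' x := if x == l.1 then ~~ v x else v x.
have Hv' : peval v' pi.
  rewrite (@peval_patoms v' v) // => x Hx; rewrite /v'.
  by case: eqP => // Ex; rewrite -Ex Hx in Hout.
have [l'' Hl'' Hv'l''] := Hent v' Hv'.
have Nl'' : l''.1 != l.1.
  apply: contraTneq Hv'l'' => E; rewrite (clause_lit_eq Hl Hl'' E) /litv /v' eqxx.
  by move: Hvl'; rewrite El' /litv; case: (v _); case: (l.2).
exists l''; first by apply/fsetD1P; split=> //; apply: contra_neq Nl'' => ->.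
by move: Hv'l''; rewrite /litv /v' (negbTE Nl'').
Qed.

Definition patom_lits pi : {fset A * bool} :=
  [fset (x, b) | x : A in patoms pi, b : bool in [:: true; false]].

Lemma Cset_finite pi : exists s : seq (clause A), forall D, D \in s <-> Cset pi D.
Proof.
exists [seq D <- pmap insub (fpowerset (patom_lits pi)) | asbool (Cset pi D)] => D.
rewrite mem_filter mem_pmap_sub fpowersetE.
split=> [/andP [/asboolP] //|HD]; apply/andP; split; first exact/asboolP.
apply/fsubsetP => -[x b] /(Cset_patoms HD) Hx.
apply/imfset2P; exists x => //; exists b => //.
by rewrite !inE; case: b {Hx}.
Qed.

End ClauseSets.

Section Reduction.
Variables (A : choiceType) (L : logic).
Implicit Types f g : form A.

Fixpoint modal f : bool :=
  match f with
  | FTop | FAtom _ => true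
  | FNeg g | FBox g => modal g
  | FAnd g h => modal g && modal h
  | FDag _ _ | FUpd _ _ _ _ => false
  end.

Definition reducible f := exists2 b, modal b & prv L (FIff f b).

Lemma modal_reducible f : modal f -> reducible f.
Proof. by exists f => //; apply: prv_iff_refl. Qed.

Lemma reducible_iff f g : prv L (FIff f g) -> reducible g -> reducible f.
Proof. by move=> Hfg [b Hb Hgb]; exists b => //; apply: prv_iff_trans Hfg Hgb. Qed.

Lemma reducible_neg f : reducible f -> reducible (FNeg f).
Proof. by case=> b Hb Hfb; exists (FNeg b) => //; apply: prv_iff_neg. Qed.

Lemma reducible_and f g : reducible f -> reducible g -> reducible (FAnd f g).
Proof.
by case=> b Hb Hfb [c Hc Hgc]; exists (FAnd b c); [apply/andP | apply: prv_iff_and].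
Qed.

Lemma reducible_box f : reducible f -> reducible (FBox f).
Proof. by case=> b Hb Hfb; exists (FBox b) => //; apply: prv_iff_box. Qed.

Lemma reducible_bigAnd (T : eqType) (F : T -> form A) (s : seq T) :
  (forall x, x \in s -> reducible (F x)) -> reducible (bigAnd (map F s)).
Proof.
elim: s => [|x s IH] Hs /=; first exact: modal_reducible.
apply: reducible_and; first by apply: Hs; rewrite mem_head.
by apply: IH => y Hy; apply: Hs; rewrite in_cons Hy orbT.
Qed.

Lemma upd_atom_reducible D1 D2 i p : reducible (FUpd D1 D2 i (FAtom p)).
Proof.
have clause_case j D : (j = U1 /\ D = D1) \/ (j = U2 /\ D = D2) ->
    reducible (FUpd D1 D2 j (FAtom p)).
  move=> HD; case Hf: ((p, false) \in val D).
    exact: reducible_iff (ax3_top _ HD Hf) (modal_reducible _).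
  case Ht: ((p, true) \in val D).
    exact: reducible_iff (ax3_bot _ HD Ht) (modal_reducible _).
  by apply: reducible_iff (ax3_keep _ HD _ _) (modal_reducible _); rewrite ?Ht ?Hf.
case: i; first exact: reducible_iff (ax2 _ _ _ _) (modal_reducible _).
- by apply: (clause_case U1 D1); left.
- by apply: (clause_case U2 D2); right.
Qed.

Lemma upd_modal_reducible D1 D2 i g : modal g -> reducible (FUpd D1 D2 i g).
Proof.
elim: g i => //= [|p|g IH|g IHg h IHh|g IH] i.
- move=> _; apply: reducible_iff (modal_reducible (f := FTop) erefl).
  have Htop : prv L (FUpd D1 D2 i FTop) by apply: r8; prv_tauto (@nil (form A)) (@PTop nat).
  by apply: r_mp Htop; prv_tauto [:: FUpd D1 D2 i FTop] (PImp P0 (PIff P0 PTop)).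
- by move=> _; apply: upd_atom_reducible.
- by move=> Hg; apply: reducible_iff (ax4 _ _ _ _ _) (reducible_neg (IH i Hg)).
- case/andP=> Hg Hh.
  exact: reducible_iff (ax5 _ _ _ _ _ _) (reducible_and (IHg i Hg) (IHh i Hh)).
- move=> Hg; apply: reducible_iff (ax6 _ _ _ _ _) _.
  by apply/reducible_box/reducible_and/reducible_and; apply: IH.
Qed.

Lemma reducible_upd D1 D2 i g : reducible g -> reducible (FUpd D1 D2 i g).
Proof.
case=> b Hb Hgb.
exact: reducible_iff (prv_iff_upd _ _ _ Hgb) (upd_modal_reducible _ _ _ Hb).
Qed.

Theorem reducible_all f : reducible f.
Proof.
elim: f => [|p|g|g IHg h IHh|g|pi g IH|D1 D2 i g].
- exact: modal_reducible.
- exact: modal_reducible.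
- exact: reducible_neg.
- exact: reducible_and.
- exact: reducible_box.
- have [s1 Hs1] := Cset_finite pi; have [s2 Hs2] := Cset_finite (PNeg pi).
  apply: reducible_iff (ax1 L g Hs1 Hs2) _.
  by apply: reducible_bigAnd => D1 _; apply: reducible_bigAnd => D2 _; apply: reducible_upd.
- exact: reducible_upd.
Qed.

End Reduction.

Section Countable.
Variable A : countType.

Fixpoint pf_code (a : pf A) : GenTree.tree A :=
  match a with
  | PTop => GenTree.Node 0 [::]
  | PVar x => GenTree.Leaf x
  | PNeg b => GenTree.Node 1 [:: pf_code b]
  | PAnd b c => GenTree.Node 2 [:: pf_code b; pf_code c]
  end.

Fixpoint pf_decode (t : GenTree.tree A) : option (pf A) :=
  match t with
  | GenTree.Node 0 [::] => Some PTop
  | GenTree.Leaf x => Some (PVar x)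
  | GenTree.Node 1 [:: t] => omap (@PNeg A) (pf_decode t)
  | GenTree.Node 2 [:: t; u] =>
      if pf_decode t is Some b then omap (PAnd b) (pf_decode u) else None
  | _ => None
  end.

Lemma pf_codeK : pcancel pf_code pf_decode.
Proof. by elim=> //= [b ->|b -> c ->]. Qed.

HB.instance Definition _ := Countable.copy (pf A) (pcan_type pf_codeK).

Definition form_leaf := (A + pf A + clause A)%type.

Definition upd_code (i : upd) : nat := match i with U0 => 5 | U1 => 6 | U2 => 7 end.

Fixpoint form_code (f : form A) : GenTree.tree form_leaf :=
  match f with
  | FTop => GenTree.Node 0 [::]
  | FAtom p => GenTree.Leaf (inl (inl p))
  | FNeg g => GenTree.Node 1 [:: form_code g]
  | FAnd g h => GenTree.Node 2 [:: form_code g; form_code h]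
  | FBox g => GenTree.Node 3 [:: form_code g]
  | FDag pi g => GenTree.Node 4 [:: GenTree.Leaf (inl (inr pi)); form_code g]
  | FUpd D1 D2 i g =>
      GenTree.Node (upd_code i) [:: GenTree.Leaf (inr D1); GenTree.Leaf (inr D2); form_code g]
  end.

Fixpoint form_decode (t : GenTree.tree form_leaf) : option (form A) :=
  match t with
  | GenTree.Node 0 [::] => Some FTop
  | GenTree.Leaf (inl (inl p)) => Some (FAtom p)
  | GenTree.Node 1 [:: t] => omap (@FNeg A) (form_decode t)
  | GenTree.Node 2 [:: t; u] =>
      if form_decode t is Some g then omap (FAnd g) (form_decode u) else None
  | GenTree.Node 3 [:: t] => omap (@FBox A) (form_decode t)
  | GenTree.Node 4 [:: GenTree.Leaf (inl (inr pi)); t] => omap (FDag pi) (form_decode t)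
  | GenTree.Node 5 [:: GenTree.Leaf (inr D1); GenTree.Leaf (inr D2); t] =>
      omap (FUpd D1 D2 U0) (form_decode t)
  | GenTree.Node 6 [:: GenTree.Leaf (inr D1); GenTree.Leaf (inr D2); t] =>
      omap (FUpd D1 D2 U1) (form_decode t)
  | GenTree.Node 7 [:: GenTree.Leaf (inr D1); GenTree.Leaf (inr D2); t] =>
      omap (FUpd D1 D2 U2) (form_decode t)
  | _ => None
  end.

Lemma form_codeK : pcancel form_code form_decode.
Proof. by elim=> //= [g ->|g -> h ->|g ->|pi g ->|D1 D2 [] g ->]. Qed.

HB.instance Definition _ := Countable.copy (form A) (pcan_type form_codeK).

End Countable.

Section Completeness.
Variables (A : countType) (L : logic).
Implicit Types (f g x y z : form A) (S : form A -> Prop).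

Definition consistent S :=
  forall l, (forall x, x \in l -> S x) -> ~ prv L (FNeg (bigAnd l)).

Definition add S z : form A -> Prop := fun x => S x \/ x = z.

Lemma bigAnd_split S z l : (forall x, x \in l -> add S z x) ->
  exists2 l', (forall x, x \in l' -> S x) & prv L (FImp (FAnd (bigAnd l') z) (bigAnd l)).
Proof.
elim: l => [|x l IH] Hl /=.
  by exists [::] => //; prv_tauto [:: z] (PImp (PAnd PTop P0) PTop).
have [l' Hl' Hl'l] : exists2 l', (forall x, x \in l' -> S x) &
    prv L (FImp (FAnd (bigAnd l') z) (bigAnd l)).
  by apply: IH => y Hy; apply: Hl; rewrite in_cons Hy orbT.
case: (Hl x (mem_head _ _)) => [Sx|->].
  exists (x :: l') => [y|/=]; first by rewrite in_cons => /predU1P [->|/Hl'].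
  apply: r_mp Hl'l; prv_tauto [:: bigAnd l'; z; bigAnd l; x]
    (PImp (PImp (PAnd P0 P1) P2) (PImp (PAnd (PAnd P3 P0) P1) (PAnd P3 P2))).
exists l' => //; apply: r_mp Hl'l; prv_tauto [:: bigAnd l'; z; bigAnd l]
  (PImp (PImp (PAnd P0 P1) P2) (PImp (PAnd P0 P1) (PAnd P1 P2))).
Qed.

Lemma inconsistent_add S z : ~ consistent (add S z) ->
  exists2 l, (forall x, x \in l -> S x) & prv L (FImp (bigAnd l) (FNeg z)).
Proof.
move=> Hinc; apply: NNPP => Hno; apply: Hinc => l Hl Hnl.
have [l' Hl' Hl'l] := bigAnd_split Hl.
apply: Hno; exists l' => //; apply: prv_mp2 Hl'l Hnl.
prv_tauto [:: bigAnd l'; z; bigAnd l]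
  (PImp (PImp (PAnd P0 P1) P2) (PImp (PNeg P2) (PImp P0 (PNeg P1)))).
Qed.

Lemma consistent_add_neg S y : consistent S -> ~ consistent (add S y) ->
  consistent (add S (FNeg y)).
Proof.
move=> HS /inconsistent_add [l1 Hl1 Hy] l Hl Hny.
have [l2 Hl2 Hl2y] : exists2 l2, (forall x, x \in l2 -> S x) &
    prv L (FImp (bigAnd l2) (FNeg (FNeg y))).
  by apply: inconsistent_add => Hc; apply: Hc Hl Hny.
apply: (HS (l1 ++ l2)) => [x|].
  by rewrite mem_cat => /orP [/Hl1|/Hl2].
apply: r_mp Hl2y; apply: r_mp Hy; apply: r_mp (prv_bigAnd_cat L l1 l2).
prv_tauto [:: bigAnd (l1 ++ l2); bigAnd l1; bigAnd l2; y]
  (PImp (PImp P0 (PAnd P1 P2)) (PImp (PImp P1 (PNeg P3))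
    (PImp (PImp P2 (PNeg (PNeg P3))) (PNeg P0)))).
Qed.

Definition extend S x : form A -> Prop :=
  if asbool (consistent (add S x)) then add S x else add S (FNeg x).

Lemma extend_sub S x y : S y -> extend S x y.
Proof. by move=> Sy; rewrite /extend; case: asboolP; left. Qed.

Lemma extend_consistent S x : consistent S -> consistent (extend S x).
Proof.
by move=> HS; rewrite /extend; case: asboolP => // Hx; apply: consistent_add_neg.
Qed.

Lemma extend_decides S x : extend S x x \/ extend S x (FNeg x).
Proof. by rewrite /extend; case: asboolP => _; [left | right]; right. Qed.

Fixpoint chain S n : form A -> Prop :=
  if n is m.+1 then
    if @choice.unpickle (form A) m is Some x then extend (chain S m) x else chain S m
  else S.

Lemma chain_mono S m n x : m <= n -> chain S m x -> chain S n x.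
Proof.
elim: n => [|n IH]; first by rewrite leqn0 => /eqP ->.
rewrite leq_eqVlt ltnS => /predU1P [-> //|/IH Hmn /Hmn] /=.
by case: choice.unpickle => // y; apply: extend_sub.
Qed.

Lemma chain_consistent S n : consistent S -> consistent (chain S n).
Proof.
by move=> HS; elim: n => //= n IH; case: choice.unpickle => // x; apply: extend_consistent.
Qed.

Lemma chain_finite S (l : seq (form A)) : (forall x, x \in l -> exists n, chain S n x) ->
  exists n, forall x, x \in l -> chain S n x.
Proof.
elim: l => [|y l IH] Hl; first by exists 0.
have [n Hn] : exists n, forall x, x \in l -> chain S n x.
  by apply: IH => x Hx; apply: Hl; rewrite in_cons Hx orbT.
have [m Hm] := Hl y (mem_head y l).
exists (maxn n m) => x; rewrite in_cons => /predU1P [->|/Hn].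
  by apply: chain_mono Hm; rewrite leq_maxr.
by apply: chain_mono; rewrite leq_maxl.
Qed.

Definition mcs G := consistent G /\ forall x, G x \/ G (FNeg x).

Lemma lindenbaum S : consistent S -> exists2 G, mcs G & forall x, S x -> G x.
Proof.
move=> HS; exists (fun x => exists n, chain S n x); last by move=> x Sx; exists 0.
split=> [l /chain_finite [n Hn]|x]; first exact: chain_consistent HS l Hn.
case: (extend_decides (chain S (choice.pickle x)) x) => Hx; [left | right];
  by exists (choice.pickle x).+1; rewrite /= choice.pickleK.
Qed.

Section MaximalConsistent.
Variable G : form A -> Prop.
Hypothesis HG : mcs G.

Lemma mcs_derive l x : (forall y, y \in l -> G y) -> prv L (FImp (bigAnd l) x) -> G x.
Proof.
move=> Hl Hlx; case: (HG.2 x) => // Hnx; exfalso.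
apply: (HG.1 (FNeg x :: l)) => [y|]; first by rewrite in_cons => /predU1P [->|/Hl].
by apply: r_mp Hlx; prv_tauto [:: bigAnd l; x]
  (PImp (PImp P0 P1) (PNeg (PAnd (PNeg P1) P0))).
Qed.

Lemma mcs_mp f x : G f -> prv L (FImp f x) -> G x.
Proof.
move=> Hf Hfx; apply: (@mcs_derive [:: f]) => [y|]; first by rewrite inE => /eqP ->.
by apply: r_mp Hfx; prv_tauto [:: f; x] (PImp (PImp P0 P1) (PImp (PAnd P0 PTop) P1)).
Qed.

Lemma mcs_top : G FTop.
Proof.
by apply: (@mcs_derive [::]) => //; prv_tauto (@nil (form A)) (PImp PTop (@PTop nat)).
Qed.

Lemma mcs_neg x : G (FNeg x) <-> ~ G x.
Proof.
split=> [Hnx Hx|Hnx]; last by case: (HG.2 x) => // /Hnx.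
apply: (HG.1 [:: x; FNeg x]) => [y|]; first by rewrite !inE => /orP [] /eqP ->.
by prv_tauto [:: x] (PNeg (PAnd P0 (PAnd (PNeg P0) PTop))).
Qed.

Lemma mcs_and x y : G (FAnd x y) <-> G x /\ G y.
Proof.
split=> [Hxy|[Hx Hy]].
  split; apply: mcs_mp Hxy _; first by prv_tauto [:: x; y] (PImp (PAnd P0 P1) P0).
  by prv_tauto [:: x; y] (PImp (PAnd P0 P1) P1).
apply: (@mcs_derive [:: x; y]) => [z|]; first by rewrite !inE => /orP [] /eqP ->.
by prv_tauto [:: x; y] (PImp (PAnd P0 (PAnd P1 PTop)) (PAnd P0 P1)).
Qed.

End MaximalConsistent.

Definition world := {G | mcs G}.
Definition canon_rel (u v : world) := forall g, sval u (FBox g) -> sval v g.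
Definition canon_val (p : A) (u : world) := sval u (FAtom p).

Lemma canon_box_witness (u : world) g :
  ~ sval u (FBox g) -> exists2 v : world, canon_rel u v & sval v (FNeg g).
Proof.
move=> Hng; pose S := add (fun x => sval u (FBox x)) (FNeg g).
have HS : consistent S.
  apply: NNPP => /inconsistent_add [l Hl Hlg]; apply: Hng.
  apply: (mcs_derive (svalP u) (l := map (@FBox A) l)) => [x /mapP [y /Hl Hy ->] //|].
  apply: prv_box_bigAnd; apply: r_mp Hlg.
  by prv_tauto [:: bigAnd l; g] (PImp (PImp P0 (PNeg (PNeg P1))) (PImp P0 P1)).
have [G HG HSG] := lindenbaum HS.
by exists (exist _ G HG) => [x Hx|]; apply: HSG; [left | right].
Qed.

Lemma canon_truth f : modal f -> forall u : world, sat canon_rel canon_val u f <-> sval u f.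
Proof.
elim: f => //= [_ u|g IH Hg u|g IHg h IHh /andP [Hg Hh] u|g IH Hg u].
- by split=> // _; apply: mcs_top (svalP u).
- by rewrite IH // mcs_neg //; apply: svalP.
- by rewrite IHg // IHh // mcs_and //; apply: svalP.
- split=> [Hbox|Hgu v Huv]; last by apply/IH => //; apply: Huv.
  apply: NNPP => /canon_box_witness [v Huv].
  by move/(mcs_neg (svalP v)); apply; apply/IH => //; apply: Hbox.
Qed.

Lemma canon_reflexive : hasT L -> reflexive_R canon_rel.
Proof. by move=> HT u g Hg; exact: (mcs_mp (svalP u) Hg (ax_T _ HT)). Qed.

Lemma canon_transitive : has4 L -> transitive_R canon_rel.
Proof.
by move=> H4 u v w Huv Hvw g Hg; apply/Hvw/Huv; exact: (mcs_mp (svalP u) Hg (ax_4 _ H4)).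
Qed.

Lemma canon_box_back (u v : world) g :
  has5 L -> canon_rel u v -> sval v (FBox g) -> sval u (FBox g).
Proof.
move=> H5 Huv Hv; apply: NNPP => /(mcs_neg (svalP u)) Hn.
have /(mcs_neg (svalP v)) := Huv _ (mcs_mp (svalP u) Hn (ax_5 _ H5)).
exact.
Qed.

Lemma canon_euclidean : has5 L -> euclidean_R canon_rel.
Proof. by move=> H5 u v w Huv Huw g /(canon_box_back H5 Huv); apply: Huw. Qed.

Lemma canon_symmetric : hasT L -> has5 L -> symmetric_R canon_rel.
Proof. by move=> HT H5 u v Huv g /(canon_box_back H5 Huv); apply: canon_reflexive. Qed.

Theorem completeness_modal f : modal f -> valid L f -> prv L f.
Proof.
move=> Hf Hvalid; apply: NNPP => Hnf.
have HS : consistent (add (fun _ => False) (FNeg f)).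
  apply: NNPP => /inconsistent_add [[|x l] Hl Hlf]; last by case: (Hl x (mem_head x l)).
  by apply: Hnf; apply: r_mp Hlf; prv_tauto [:: f] (PImp (PImp PTop (PNeg (PNeg P0))) P0).
have [G HG HSG] := lindenbaum HS.
have canon_frame : frame L canon_rel.
  exact: frameI canon_reflexive canon_transitive canon_euclidean canon_symmetric.
have := Hvalid _ _ canon_val (inhabits (exist _ G HG)) canon_frame (exist _ G HG).
by move/(canon_truth Hf); apply/(mcs_neg HG)/HSG; right.
Qed.

End Completeness.

Theorem corollary2 (A : countType) (a0 : A) (L : logic) (f : form A) :
  no_upd f -> (valid L f <-> prv L f).
Proof.
move=> _; split=> [Hvalid|]; last exact: soundness.
have [b Hb Hfb] := reducible_all L f.
have Hvalid_b : valid L b.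
  move=> W R V HW HR w; apply/(sat_iff R V w f b).1; last exact: Hvalid.
  exact: soundness Hfb W R V HW HR w.
exact: r_mp (prv_iffRL Hfb) (completeness_modal Hb Hvalid_b).
Qed.
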